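(* In the setting described in the context, there exists $\overline\alpha>0$ such that for every $\alpha\in[0,\overline\alpha]$, the function $z_{1,\alpha}$ is nonnegative on $(0,R)$.
   Context: Let $n=2$, $\Omega=\mathbb B(0,R)$, $0<m_0<\kappa$, $r_0^*\in(0,R)$ with $\kappa|\mathbb B(0,r_0^* )|=m_0|\Omega|$, $m_0^*=\kappa\mathds 1_{\mathbb B(0,r_0^* )}$ and $\sigma_\alpha=1+\alpha m_0^*$. Let $\lambda_{0,\alpha}$ be the principal Dirichlet eigenvalue of $u\mapsto-\nabla\cdot(\sigma_\alpha\nabla u)-m_0^*u$ on $\Omega$ and $u_{0,\alpha}$ the nonnegative $L^2$-normalized eigenfunction, which is radial; we write $u_{0,\alpha}(r)$ for its profile. For $f$ defined near $r_0^*$, $f|_{int}(r_0^* )$, $f|_{ext}(r_0^* )$ denote the one-sided limits from $r<r_0^*$ and $r>r_0^*$, and $[\![f]\!]=f|_{ext}-f|_{int}$. For $k\ge1$, $z_{k,\alpha}:[0,R]\to\mathbb{R}$ is the solution of $-\sigma_\alpha z''-\frac{\sigma_\alpha}{r}z'=(\lambda_{0,\alpha}-\frac{k^2}{r^2})z+m_0^*z$ on $(0,r_0^* )\cup(r_0^*,R)$, with $[\![\sigma_\alpha z']\!](r_0^* )=-\kappa u_{0,\alpha}(r_0^* )$, $[\![z]\!](r_0^* )=-[\![\partial_ru_{0,\alpha}]\!](r_0^* )$, $z(0)=0$, $z(R)=0$. *)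

From Stdlib Require Import Reals.
From Coquelicot Require Import Coquelicot.
Open Scope R_scope.

(* m_0^* = kappa * indicator of the open ball B(0,r0), as a radial profile. *)
Definition mstar (kappa r0 : R) (r : R) : R :=
  if Rlt_dec r r0 then kappa else 0.

Definition sigma (alpha kappa r0 : R) (r : R) : R :=
  1 + alpha * mstar kappa r0 r.

Definition radial_eq_at (s m lam k : R) (f : R -> R) (r : R) : Prop :=
  ex_derive f r /\ ex_derive (Derive f) r /\
  - s * Derive (Derive f) r - s / r * Derive f r
    = (lam - k ^ 2 / r ^ 2) * f r + m * f r.

(* (lam, u) is the principal Dirichlet eigenpair of
   u |-> - div(sigma_alpha grad u) - m_0^* u on B(0,Rad) (in R^2),
   described through the radial profile u : [0,Rad] -> R:
   u solves the radial equation (k = 0) on (0,r0) and (r0,Rad), is continuous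
   on [0,Rad] (in particular bounded at 0 and continuous across r0),
   satisfies the transmission condition [[sigma u']](r0) = 0,
   the Dirichlet condition u(Rad) = 0, is positive on [0,Rad)
   (positivity characterizes the principal eigenfunction), and is
   L^2(Omega)-normalized: int_Omega u^2 = 2 pi int_0^Rad u(r)^2 r dr = 1. *)
Definition principal_pair (Rad kappa r0 alpha lam : R) (u : R -> R) : Prop :=
  (forall r, 0 < r < Rad -> r <> r0 ->
     radial_eq_at (sigma alpha kappa r0 r) (mstar kappa r0 r) lam 0 u r) /\
  filterlim u (at_right 0) (locally (u 0)) /\
  continuous u r0 /\
  filterlim u (at_left Rad) (locally (u Rad)) /\
  u Rad = 0 /\
  (forall r, 0 <= r < Rad -> 0 < u r) /\
  (exists di de : R,
     filterlim (fun r => sigma alpha kappa r0 r * Derive u r) (at_left r0) (locally di) /\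
     filterlim (fun r => sigma alpha kappa r0 r * Derive u r) (at_right r0) (locally de) /\
     de - di = 0) /\
  2 * PI * RInt (fun r => u r ^ 2 * r) 0 Rad = 1.

(* z = z_{k,alpha}: solves the radial equation on (0,r0) and (r0,Rad) with
   [[sigma z']](r0) = - kappa u(r0), [[z]](r0) = - [[u']](r0), z(0) = 0,
   z(Rad) = 0, where [[f]] = f|ext - f|int (one-sided limits at r0). *)
Definition z_sol (Rad kappa r0 alpha lam : R) (u : R -> R) (k : R) (z : R -> R)
  : Prop :=
  (forall r, 0 < r < Rad -> r <> r0 ->
     radial_eq_at (sigma alpha kappa r0 r) (mstar kappa r0 r) lam k z r) /\
  (exists zi ze szi sze dui due : R,
     filterlim z (at_left r0) (locally zi) /\
     filterlim z (at_right r0) (locally ze) /\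
     filterlim (fun r => sigma alpha kappa r0 r * Derive z r) (at_left r0) (locally szi) /\
     filterlim (fun r => sigma alpha kappa r0 r * Derive z r) (at_right r0) (locally sze) /\
     filterlim (Derive u) (at_left r0) (locally dui) /\
     filterlim (Derive u) (at_right r0) (locally due) /\
     sze - szi = - kappa * u r0 /\
     ze - zi = - (due - dui)) /\
  z 0 = 0 /\ filterlim z (at_right 0) (locally 0) /\
  z Rad = 0 /\ filterlim z (at_left Rad) (locally 0).

(* Write q = z/u and W = r sigma (u z' - z u').  Away from r0 the pair (q, W) solves
   q' = W / (sigma r u^2), W' = (u^2 / r) q, so W q is nondecreasing and a negative value
   of q propagates forward in r while W <= 0 and backward while W >= 0.  Together with
   z(0) = z(Rad) = 0 and W(Rad) = 0 this excludes negative values of z on either side of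
   r0, up to the jumps across r0.  The transmission conditions give
   z(r0+) = z(r0-) + tau |sigma u'(r0)| and
   W(r0+) = W(r0-) + r0 (tau (sigma u'(r0))^2 - kappa u(r0)^2), with
   tau = alpha kappa / (1 + alpha kappa); ODE estimates on u bound |sigma u'(r0)| by a
   constant times u(r0), so for small alpha the jump terms are dominated by
   r0 kappa u(r0)^2 and no sign change can occur. *)

From Stdlib Require Import Reals Lra Psatz.
From Coquelicot Require Import Coquelicot.
Open Scope R_scope.

(** * Mean-value estimates and one-sided limits *)

Lemma is_derive_continuity_pt (f : R -> R) x l :
  is_derive f x l -> continuity_pt f x.
Proof.
  intros H. apply continuity_pt_filterlim, (ex_derive_continuous f x). now exists l.
Qed.

Lemma mvt_on (f df : R -> R) a b x y :
  (forall t, a < t < b -> is_derive f t (df t)) -> a < x -> x <= y -> y < b ->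
  exists c, x <= c <= y /\ f y - f x = df c * (y - x).
Proof.
  intros Hd Hx Hxy Hy.
  destruct (MVT_gen f x y df) as [c [Hc Heq]]; cbv zeta in *;
    rewrite ?Rmin_left, ?Rmax_right in * by lra.
  - intros t Ht. apply Hd. lra.
  - intros t Ht. apply (is_derive_continuity_pt f t (df t)), Hd. lra.
  - now exists c.
Qed.

Lemma deriv_le_bound (f df : R -> R) a b M x y :
  (forall t, a < t < b -> is_derive f t (df t)) ->
  (forall t, x <= t <= y -> df t <= M) -> a < x -> x <= y -> y < b ->
  f y - f x <= M * (y - x).
Proof.
  intros Hd HM Hx Hxy Hy.
  destruct (mvt_on f df a b x y) as [c [Hc ->]]; auto.
  specialize (HM c Hc). nra.
Qed.

Lemma deriv_ge_bound (f df : R -> R) a b M x y :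
  (forall t, a < t < b -> is_derive f t (df t)) ->
  (forall t, x <= t <= y -> M <= df t) -> a < x -> x <= y -> y < b ->
  M * (y - x) <= f y - f x.
Proof.
  intros Hd HM Hx Hxy Hy.
  destruct (mvt_on f df a b x y) as [c [Hc ->]]; auto.
  specialize (HM c Hc). nra.
Qed.

Lemma abs_le_of_deriv_bounded (f df : R -> R) a b M x y :
  (forall t, a < t < b -> is_derive f t (df t)) ->
  (forall t, x <= t <= y -> Rabs (df t) <= M) -> a < x -> x <= y -> y < b ->
  Rabs (f y) <= Rabs (f x) + M * (y - x).
Proof.
  intros Hd HM Hx Hxy Hy.
  destruct (mvt_on f df a b x y) as [c [Hc Heq]]; auto.
  specialize (HM c Hc).
  replace (f y) with (f x + df c * (y - x)) by lra.
  eapply Rle_trans; [apply Rabs_triang|]. rewrite Rabs_mult, (Rabs_right (y - x)) by lra.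
  apply Rplus_le_compat_l, Rmult_le_compat_r; lra.
Qed.

Lemma lim_le_of_ev F {FF : ProperFilter F} (f : R -> R) (l c : R) :
  filterlim f F (locally l) -> F (fun x => f x <= c) -> l <= c.
Proof.
  intros Hf Hc.
  exact (filterlim_le (F := F) f (fun _ => c) l c Hc Hf (filterlim_const c)).
Qed.

Lemma lim_ge_of_ev F {FF : ProperFilter F} (f : R -> R) (l c : R) :
  filterlim f F (locally l) -> F (fun x => c <= f x) -> c <= l.
Proof.
  intros Hf Hc.
  exact (filterlim_le (F := F) (fun _ => c) f c l Hc (filterlim_const c) Hf).
Qed.

Lemma ev_lt_of_lim F {FF : Filter F} (f : R -> R) (l c : R) :
  filterlim f F (locally l) -> l < c -> F (fun x => f x < c).
Proof. intros Hf Hc. exact (Hf (fun y => y < c) (open_lt c l Hc)). Qed.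

Lemma ev_gt_of_lim F {FF : Filter F} (f : R -> R) (l c : R) :
  filterlim f F (locally l) -> c < l -> F (fun x => c < f x).
Proof. intros Hf Hc. exact (Hf (fun y => c < y) (open_gt c l Hc)). Qed.

Lemma lim_unique F {FF : ProperFilter F} (f : R -> R) (l l' : R) :
  filterlim f F (locally l) -> filterlim f F (locally l') -> l = l'.
Proof.
  intros Hl Hl'.
  assert (Hff : F (fun x => f x <= f x)) by (apply filter_forall; intros; lra).
  apply Rle_antisym; [exact (filterlim_le f f l l' Hff Hl Hl')
                     | exact (filterlim_le f f l' l Hff Hl' Hl)].
Qed.

Lemma at_right_of_interval x b (P : R -> Prop) :
  x < b -> (forall y, x < y < b -> P y) -> at_right x P.
Proof.
  intros Hb HP. exists (mkposreal _ (proj2 (Rlt_0_minus _ _) Hb)). intros y Hy Hxy.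
  change (Rabs (y - x) < b - x) in Hy. apply Rabs_def2 in Hy. apply HP. lra.
Qed.

Lemma at_left_of_interval a x (P : R -> Prop) :
  a < x -> (forall y, a < y < x -> P y) -> at_left x P.
Proof.
  intros Ha HP. exists (mkposreal _ (proj2 (Rlt_0_minus _ _) Ha)). intros y Hy Hyx.
  change (Rabs (y - x) < x - a) in Hy. apply Rabs_def2 in Hy. apply HP. lra.
Qed.

Lemma at_left_interval x (P : R -> Prop) :
  at_left x P -> exists a, a < x /\ forall y, a < y < x -> P y.
Proof.
  intros [d Hd]. exists (x - d). split; [pose proof (cond_pos d); lra|].
  intros y Hy. apply Hd; [|lra]. change (Rabs (y - x) < d). apply Rabs_def1; lra.
Qed.

Lemma at_right_witness x b (P : R -> Prop) :
  x < b -> at_right x P -> exists y, x < y < b /\ P y.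
Proof.
  intros Hb HP.
  destruct (filter_ex _ (filter_and _ _ HP
    (at_right_of_interval x b (fun y => x < y < b) Hb (fun y Hy => Hy))))
    as [y [Py Hy]].
  now exists y.
Qed.

Lemma at_left_witness a x (P : R -> Prop) :
  a < x -> at_left x P -> exists y, a < y < x /\ P y.
Proof.
  intros Ha HP.
  destruct (filter_ex _ (filter_and _ _ HP
    (at_left_of_interval a x (fun y => a < y < x) Ha (fun y Hy => Hy))))
    as [y [Py Hy]].
  now exists y.
Qed.

Lemma lim_plus {F} {FF : Filter F} (f g : R -> R) (a b : R) :
  filterlim f F (locally a) -> filterlim g F (locally b) ->
  filterlim (fun x => f x + g x) F (locally (a + b)).
Proof. intros Hf Hg. exact (filterlim_comp_2 f g Rplus Hf Hg (filterlim_plus a b)). Qed.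

Lemma lim_mult {F} {FF : Filter F} (f g : R -> R) (a b : R) :
  filterlim f F (locally a) -> filterlim g F (locally b) ->
  filterlim (fun x => f x * g x) F (locally (a * b)).
Proof. intros Hf Hg. exact (filterlim_comp_2 f g Rmult Hf Hg (filterlim_mult a b)). Qed.

Lemma lim_minus {F} {FF : Filter F} (f g : R -> R) (a b : R) :
  filterlim f F (locally a) -> filterlim g F (locally b) ->
  filterlim (fun x => f x - g x) F (locally (a - b)).
Proof.
  intros Hf Hg. replace (a - b) with (a + -1 * b) by ring.
  apply (filterlim_ext (fun x => f x + -1 * g x)); [intros; ring|].
  apply lim_plus, lim_mult; auto. apply filterlim_const.
Qed.

Lemma lim_le_scaled F {FF : ProperFilter F} (f g : R -> R) (lf lg c : R) :
  filterlim f F (locally lf) -> filterlim g F (locally lg) ->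
  F (fun x => f x <= c * g x) -> lf <= c * lg.
Proof.
  intros Hf Hg H.
  exact (filterlim_le f (fun x => c * g x) lf (c * lg) H Hf
           (lim_mult _ _ _ _ (filterlim_const c) Hg)).
Qed.

Lemma lim_ge_scaled F {FF : ProperFilter F} (f g : R -> R) (lf lg c : R) :
  filterlim f F (locally lf) -> filterlim g F (locally lg) ->
  F (fun x => c * g x <= f x) -> c * lg <= lf.
Proof.
  intros Hf Hg H.
  exact (filterlim_le (fun x => c * g x) f (c * lg) lf H
           (lim_mult _ _ _ _ (filterlim_const c) Hg) Hf).
Qed.

Lemma lim_id_at_right x : filterlim (fun t => t) (at_right x) (locally x).
Proof. apply (filterlim_filter_le_1 _ (filter_le_within _)), filterlim_id. Qed.

Lemma lim_id_at_left x : filterlim (fun t => t) (at_left x) (locally x).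
Proof. apply (filterlim_filter_le_1 _ (filter_le_within _)), filterlim_id. Qed.

Lemma continuous_at_right (f : R -> R) x :
  continuous f x -> filterlim f (at_right x) (locally (f x)).
Proof. apply (filterlim_filter_le_1 _ (filter_le_within _)). Qed.

Lemma continuous_at_left (f : R -> R) x :
  continuous f x -> filterlim f (at_left x) (locally (f x)).
Proof. apply (filterlim_filter_le_1 _ (filter_le_within _)). Qed.

Section DeriveBoundsWithLimits.
Variables (f df : R -> R) (a b : R).
Hypothesis f_derive : forall t, a < t < b -> is_derive f t (df t).

Lemma deriv_le_lim_left M La r :
  (forall t, a < t < b -> df t <= M) -> filterlim f (at_right a) (locally La) ->
  a < r < b -> f r <= La + M * (r - a).
Proof.
  intros HM Hl Hr.
  apply (lim_ge_of_ev (at_right a) (fun x => f x + M * (r - x))).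
  - apply lim_plus; [exact Hl|]. apply lim_mult; [apply filterlim_const|].
    apply lim_minus; [apply filterlim_const | apply lim_id_at_right].
  - apply (at_right_of_interval a r); [lra|]. intros x Hx.
    pose proof (deriv_le_bound f df a b M x r f_derive) as Hb.
    enough (f r - f x <= M * (r - x)) by lra.
    apply Hb; intros; try apply HM; lra.
Qed.

Lemma deriv_ge_lim_left M La r :
  (forall t, a < t < b -> M <= df t) -> filterlim f (at_right a) (locally La) ->
  a < r < b -> La + M * (r - a) <= f r.
Proof.
  intros HM Hl Hr.
  apply (lim_le_of_ev (at_right a) (fun x => f x + M * (r - x))).
  - apply lim_plus; [exact Hl|]. apply lim_mult; [apply filterlim_const|].
    apply lim_minus; [apply filterlim_const | apply lim_id_at_right].
  - apply (at_right_of_interval a r); [lra|]. intros x Hx.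
    pose proof (deriv_ge_bound f df a b M x r f_derive) as Hb.
    enough (M * (r - x) <= f r - f x) by lra.
    apply Hb; intros; try apply HM; lra.
Qed.

Lemma deriv_ge_lim_right M Lb r :
  (forall t, a < t < b -> M <= df t) -> filterlim f (at_left b) (locally Lb) ->
  a < r < b -> f r <= Lb - M * (b - r).
Proof.
  intros HM Hl Hr.
  apply (lim_ge_of_ev (at_left b) (fun x => f x - M * (x - r))).
  - apply lim_minus; [exact Hl|]. apply lim_mult; [apply filterlim_const|].
    apply lim_minus; [apply lim_id_at_left | apply filterlim_const].
  - apply (at_left_of_interval r b); [lra|]. intros x Hx.
    pose proof (deriv_ge_bound f df a b M r x f_derive) as Hb.
    enough (M * (x - r) <= f x - f r) by lra.
    apply Hb; intros; try apply HM; lra.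
Qed.

Lemma deriv_le_lim_both M La Lb :
  a < b -> (forall t, a < t < b -> df t <= M) ->
  filterlim f (at_right a) (locally La) -> filterlim f (at_left b) (locally Lb) ->
  Lb - La <= M * (b - a).
Proof.
  intros Hab HM Ha Hb.
  enough (Lb - M * (b - a) <= La) by lra.
  apply (lim_le_of_ev (at_left b) (fun r => f r - M * (r - a))).
  - apply lim_minus; [exact Hb|]. apply lim_mult; [apply filterlim_const|].
    apply lim_minus; [apply lim_id_at_left | apply filterlim_const].
  - apply (at_left_of_interval a b _ Hab). intros r Hr.
    pose proof (deriv_le_lim_left M La r HM Ha Hr). lra.
Qed.

End DeriveBoundsWithLimits.

Lemma no_root_same_sign (f : R -> R) x y :
  x <= y -> (forall t, x <= t <= y -> continuity_pt f t) ->
  (forall t, x <= t <= y -> f t <> 0) -> 0 < f x * f y.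
Proof.
  intros Hxy Hc Hz.
  assert (Hx := Hz x ltac:(lra)). assert (Hy := Hz y ltac:(lra)).
  destruct (Req_dec x y) as [<- | Hne].
  { destruct (Rdichotomy _ _ Hx); nra. }
  destruct (Rdichotomy _ _ Hx) as [Hfx | Hfx], (Rdichotomy _ _ Hy) as [Hfy | Hfy];
    try nra; exfalso.
  - destruct (Ranalysis5.IVT_interv f x y) as [t [Ht Hft]]; try lra; auto.
    exact (Hz t Ht Hft).
  - destruct (Ranalysis5.IVT_interv (fun t => - f t) x y) as [t [Ht Hft]];
      try lra; auto.
    + intros t Ht. apply continuity_pt_opp, Hc, Ht.
    + apply (Hz t Ht). lra.
Qed.

Lemma lim_0_of_dominated {F} {FF : Filter F} (f g h : R -> R) C :
  filterlim f F (locally 0) -> filterlim g F (locally 0) ->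
  F (fun t => Rabs (h t) <= C * (Rabs (f t) + Rabs (g t))) ->
  filterlim h F (locally 0).
Proof.
  intros Hf Hg Hh.
  set (B t := C * (Rabs (f t) + Rabs (g t))).
  assert (HB : filterlim B F (locally (C * (Rabs 0 + Rabs 0)))).
  { apply lim_mult; [apply filterlim_const|].
    apply lim_plus; [apply (filterlim_comp _ _ _ f Rabs F (locally 0))
                    | apply (filterlim_comp _ _ _ g Rabs F (locally 0))];
      auto; apply continuous_Rabs. }
  assert (HmB : filterlim (fun t => -1 * B t) F (locally (-1 * (C * (Rabs 0 + Rabs 0))))).
  { apply lim_mult; [apply filterlim_const | exact HB]. }
  rewrite Rabs_R0, Rplus_0_r, Rmult_0_r in HB, HmB. rewrite Rmult_0_r in HmB.
  apply (filterlim_le_le (fun t => -1 * B t) h B (Finite 0)); [| exact HmB | exact HB].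
  revert Hh. apply filter_imp. intros t Ht. apply Rabs_le_between in Ht. unfold B. lra.
Qed.

Lemma lim_m_infty_at_0_of_t_deriv_ge (f df : R -> R) b c :
  0 < b -> 0 < c ->
  (forall t, 0 < t < b -> is_derive f t (df t)) ->
  (forall t, 0 < t < b -> c <= t * df t) ->
  filterlim f (at_right 0) (Rbar_locally m_infty).
Proof.
  intros Hb Hc Hd Hdf P [N HN].
  set (r := b / 2).
  assert (Hlog : forall t, 0 < t < r -> f t <= f r - c * (ln r - ln t)).
  { intros t Ht.
    enough (0 * (r - t) <= (f r - c * ln r) - (f t - c * ln t)) by lra.
    apply (deriv_ge_bound (fun s => f s - c * ln s) (fun s => df s - c * / s) 0 b);
      try (unfold r in *; lra).
    - intros s Hs. apply (is_derive_minus f (fun s => c * ln s)); [now apply Hd|].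
      apply (is_derive_scal ln), is_derive_Reals, derivable_pt_lim_ln. lra.
    - intros s Hs. specialize (Hdf s ltac:(unfold r in *; lra)).
      enough (c * / s <= df s) by lra.
      apply (Rmult_le_reg_l s); [lra|]. field_simplify; lra. }
  set (A := Rabs (f r - N) + 1).
  set (T := r * exp (- (A / c))).
  assert (HT : 0 < T).
  { apply Rmult_lt_0_compat; [unfold r; lra | apply exp_pos]. }
  assert (HlnT : ln T = ln r - A / c).
  { unfold T. rewrite ln_mult, ln_exp; [ring | unfold r; lra | apply exp_pos]. }
  assert (HTr : T < r).
  { apply ln_lt_inv; [lra | unfold r; lra|]. rewrite HlnT.
    enough (0 < A / c) by lra.
    apply Rdiv_lt_0_compat; [unfold A; pose proof (Rabs_pos (f r - N)) |]; lra. }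
  apply (at_right_of_interval 0 T); [lra|]. intros t Ht. apply HN.
  specialize (Hlog t ltac:(lra)).
  assert (Hlnt : ln t < ln r - A / c) by (rewrite <- HlnT; apply ln_increasing; lra).
  assert (c * (A / c) = A) by (field; lra).
  pose proof (Rle_abs (f r - N)). unfold A in *. nra.
Qed.

(** * A planar system with a monotone product *)

Section PhasePlane.
Variables (a b : R) (q W P Q : R -> R).
Hypothesis system : forall t, a < t < b ->
  is_derive q t (P t * W t) /\ is_derive W t (Q t * q t) /\ 0 < P t /\ 0 < Q t.

Lemma q_derive_on t : a < t < b -> is_derive q t (P t * W t).
Proof. intros Ht. apply (system t Ht). Qed.

Lemma W_derive_on t : a < t < b -> is_derive W t (Q t * q t).
Proof. intros Ht. apply (system t Ht). Qed.

Lemma q_le_of_W_nonpos x y :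
  a < x -> x <= y -> y < b -> (forall t, x <= t <= y -> W t <= 0) -> q y <= q x.
Proof.
  intros Hx Hxy Hy HW.
  enough (q y - q x <= 0 * (y - x)) by lra.
  apply (deriv_le_bound q (fun t => P t * W t) a b); auto using q_derive_on.
  intros t Ht. destruct (system t ltac:(lra)) as [_ [_ [HP _]]].
  specialize (HW t Ht). nra.
Qed.

Lemma q_ge_of_W_nonneg x y :
  a < x -> x <= y -> y < b -> (forall t, x <= t <= y -> 0 <= W t) -> q x <= q y.
Proof.
  intros Hx Hxy Hy HW.
  enough (0 * (y - x) <= q y - q x) by lra.
  apply (deriv_ge_bound q (fun t => P t * W t) a b); auto using q_derive_on.
  intros t Ht. destruct (system t ltac:(lra)) as [_ [_ [HP _]]].
  specialize (HW t Ht). nra.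
Qed.

Lemma W_le_of_q_nonpos x y :
  a < x -> x <= y -> y < b -> (forall t, x <= t <= y -> q t <= 0) -> W y <= W x.
Proof.
  intros Hx Hxy Hy Hq.
  enough (W y - W x <= 0 * (y - x)) by lra.
  apply (deriv_le_bound W (fun t => Q t * q t) a b); auto using W_derive_on.
  intros t Ht. destruct (system t ltac:(lra)) as [_ [_ [_ HQ]]].
  specialize (Hq t Ht). nra.
Qed.

Lemma Wq_derive t :
  a < t < b -> is_derive (fun s => W s * q s) t (Q t * q t ^ 2 + P t * W t ^ 2).
Proof.
  intros Ht. destruct (system t Ht) as [Hq [HW _]].
  replace (Q t * q t ^ 2 + P t * W t ^ 2) with (Q t * q t * q t + W t * (P t * W t))
    by ring.
  exact (is_derive_mult W q t _ _ HW Hq Rmult_comm).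
Qed.

Lemma Wq_nondecreasing x y : a < x -> x <= y -> y < b -> W x * q x <= W y * q y.
Proof.
  intros Hx Hxy Hy.
  enough (0 * (y - x) <= W y * q y - W x * q x) by lra.
  apply (deriv_ge_bound (fun s => W s * q s)
           (fun t => Q t * q t ^ 2 + P t * W t ^ 2) a b); auto using Wq_derive.
  intros t Ht. destruct (system t ltac:(lra)) as [_ [_ [HP HQ]]]. nra.
Qed.

Lemma Wq_increasing x y :
  a < x -> x < y -> y < b -> q x <> 0 \/ q y <> 0 -> W x * q x < W y * q y.
Proof.
  intros Hx Hxy Hy Hq.
  destruct (Rlt_or_le (W x * q x) (W y * q y)) as [| Hle]; auto; exfalso.
  assert (Hflat : forall t, x <= t <= y -> W t * q t = W x * q x).
  { intros t Ht.
    pose proof (Wq_nondecreasing x t Hx ltac:(lra) ltac:(lra)).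
    pose proof (Wq_nondecreasing t y ltac:(lra) ltac:(lra) Hy). lra. }
  assert (Hzero : forall t, x < t < y -> q t = 0).
  { intros t Ht.
    assert (H0 : is_derive (fun s => W s * q s) t 0).
    { apply (is_derive_ext_loc (fun _ => W x * q x)); [| exact (is_derive_const _ _)].
      apply (filter_imp (fun s => x < s /\ s < y)).
      - intros s Hs. symmetry. apply Hflat. lra.
      - apply filter_and; [apply (open_gt x t) | apply (open_lt y t)]; lra. }
    assert (Ht' : a < t < b) by lra.
    pose proof (is_derive_unique _ _ _ H0) as E0.
    rewrite (is_derive_unique _ _ _ (Wq_derive t Ht')) in E0.
    destruct (system t Ht') as [_ [_ [HP HQ]]].
    assert (Hq2 : Q t * q t ^ 2 = 0) by nra.
    apply Rmult_integral in Hq2 as [? | Hq2]; [lra | nra]. }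
  assert (Hcont : forall t, x <= t <= y -> continuous q t).
  { intros t Ht. apply (ex_derive_continuous q t). eexists. apply q_derive_on. lra. }
  destruct Hq as [Hq | Hq]; apply Hq.
  - apply (lim_unique (at_right x) q); [now apply continuous_at_right, Hcont; lra|].
    apply (filterlim_ext_loc (fun _ => 0)); [| apply filterlim_const].
    apply (at_right_of_interval x y); [lra|]. intros s Hs. symmetry. now apply Hzero.
  - apply (lim_unique (at_left y) q); [now apply continuous_at_left, Hcont; lra|].
    apply (filterlim_ext_loc (fun _ => 0)); [| apply filterlim_const].
    apply (at_left_of_interval x y); [lra|]. intros s Hs. symmetry. now apply Hzero.
Qed.

Lemma q_no_root_same_sign x y :
  a < x -> x <= y -> y < b -> (forall t, x <= t <= y -> q t <> 0) -> 0 < q x * q y.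
Proof.
  intros Hx Hxy Hy Hq. apply no_root_same_sign; auto.
  intros t Ht. apply (is_derive_continuity_pt q t (P t * W t)), q_derive_on. lra.
Qed.

Lemma sign_forward x :
  a < x < b -> q x < 0 -> W x <= 0 -> forall t, x < t < b -> q t < 0 /\ W t < 0.
Proof.
  intros Hx Hqx HWx t Ht.
  assert (Hpos : forall s, x < s < b -> 0 < W s * q s).
  { intros s Hs. pose proof (Wq_increasing x s ltac:(lra) ltac:(lra) ltac:(lra)
      ltac:(left; lra)). nra. }
  assert (Hqt : q t < 0).
  { enough (0 < q x * q t) by nra.
    apply q_no_root_same_sign; try lra. intros s Hs.
    destruct (Req_dec s x) as [-> | Hne]; [lra|].
    specialize (Hpos s ltac:(lra)). intros E. rewrite E in Hpos. lra. }
  specialize (Hpos t Ht). split; nra.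
Qed.

Lemma sign_backward x :
  a < x < b -> q x < 0 -> 0 <= W x -> forall t, a < t < x -> q t < 0 /\ 0 < W t.
Proof.
  intros Hx Hqx HWx t Ht.
  assert (Hneg : forall s, a < s < x -> W s * q s < 0).
  { intros s Hs. pose proof (Wq_increasing s x ltac:(lra) ltac:(lra) ltac:(lra)
      ltac:(right; lra)). nra. }
  assert (Hqt : q t < 0).
  { enough (0 < q t * q x) by nra.
    apply q_no_root_same_sign; try lra. intros s Hs.
    destruct (Req_dec s x) as [-> | Hne]; [lra|].
    specialize (Hneg s ltac:(lra)). intros E. rewrite E in Hneg. lra. }
  specialize (Hneg t Ht). split; nra.
Qed.

End PhasePlane.

(** * Radial equations *)

Lemma sigma_in (alpha kappa r0 r : R) : r < r0 -> sigma alpha kappa r0 r = 1 + alpha * kappa.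
Proof. intros H. unfold sigma, mstar. now destruct (Rlt_dec r r0). Qed.

Lemma sigma_out (alpha kappa r0 r : R) : r0 < r -> sigma alpha kappa r0 r = 1.
Proof. intros H. unfold sigma, mstar. destruct (Rlt_dec r r0); [lra | ring]. Qed.

Lemma mstar_in (kappa r0 r : R) : r < r0 -> mstar kappa r0 r = kappa.
Proof. intros H. unfold mstar. now destruct (Rlt_dec r r0). Qed.

Lemma mstar_out (kappa r0 r : R) : r0 < r -> mstar kappa r0 r = 0.
Proof. intros H. unfold mstar. destruct (Rlt_dec r r0); [lra | reflexivity]. Qed.

Lemma sigma_pos (alpha kappa r0 r : R) : 0 <= alpha -> 0 <= kappa -> 0 < sigma alpha kappa r0 r.
Proof. intros Ha Hk. unfold sigma, mstar. destruct (Rlt_dec r r0); nra. Qed.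

Lemma sigma_locally_const (alpha kappa r0 r : R) :
  r <> r0 -> locally r (fun t => sigma alpha kappa r0 t = sigma alpha kappa r0 r).
Proof.
  intros Hr. destruct (Rdichotomy _ _ Hr) as [Hlt | Hgt].
  - apply (filter_imp (fun t => t < r0)); [| exact (open_lt r0 r Hlt)].
    intros t Ht. now rewrite !sigma_in.
  - apply (filter_imp (fun t => r0 < t)); [| exact (open_gt r0 r Hgt)].
    intros t Ht. now rewrite !sigma_out.
Qed.

Lemma radial_flux_derive (s m lam k : R) (f : R -> R) (r : R) :
  0 < r -> s <> 0 -> radial_eq_at s m lam k f r ->
  is_derive (fun t => t * Derive f t) r ((k ^ 2 / r - (lam + m) * r) * f r / s).
Proof.
  intros Hr Hs [_ [Hf' Heq]].
  replace ((k ^ 2 / r - (lam + m) * r) * f r / s) with (1 * Derive f r + r * Derive (Derive f) r).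
  - exact (is_derive_mult (fun t => t) (Derive f) r 1 _ (is_derive_id r)
             (Derive_correct _ _ Hf') Rmult_comm).
  - apply (Rmult_eq_reg_l s); [| exact Hs].
    replace (s * ((k ^ 2 / r - (lam + m) * r) * f r / s))
      with (- r * ((lam - k ^ 2 / r ^ 2) * f r + m * f r)) by (field; lra).
    rewrite <- Heq. field. lra.
Qed.

Lemma radial_wronskian_derive (s m lam k l : R) (f g : R -> R) (r : R) :
  0 < r -> s <> 0 -> radial_eq_at s m lam k f r -> radial_eq_at s m lam l g r ->
  is_derive (fun t => s * (f t * (t * Derive g t) - g t * (t * Derive f t))) r
    ((l ^ 2 - k ^ 2) / r * f r * g r).
Proof.
  intros Hr Hs Hf Hg.
  pose proof (radial_flux_derive s m lam k f r Hr Hs Hf) as Ff.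
  pose proof (radial_flux_derive s m lam l g r Hr Hs Hg) as Fg.
  pose proof (Derive_correct _ _ (proj1 Hf)) as Df.
  pose proof (Derive_correct _ _ (proj1 Hg)) as Dg.
  pose proof (is_derive_scal _ r s _ (is_derive_minus _ _ r _ _
    (is_derive_mult _ _ r _ _ Df Fg Rmult_comm)
    (is_derive_mult _ _ r _ _ Dg Ff Rmult_comm))) as D.
  replace ((l ^ 2 - k ^ 2) / r * f r * g r) with
    (s * ((Derive f r * (r * Derive g r)
           + f r * ((l ^ 2 / r - (lam + m) * r) * g r / s))
          - (Derive g r * (r * Derive f r)
             + g r * ((k ^ 2 / r - (lam + m) * r) * f r / s))))
    by (field; lra).
  exact D.
Qed.

Lemma radial_flux_bounded_at_left (s m lam k a0 b : R) (f : R -> R) :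
  0 < a0 < b -> 0 < s ->
  (forall r, a0 < r < b -> radial_eq_at s m lam k f r) ->
  filterlim f (at_left b) (locally 0) ->
  exists C, at_left b (fun t => Rabs (t * Derive f t) <= C).
Proof.
  intros Hab Hs Hrad Hf.
  destruct (at_left_interval b (fun t => -1 < f t < 1)) as [a [Hab' Ha]].
  { apply filter_and; [apply (ev_gt_of_lim _ f 0) | apply (ev_lt_of_lim _ f 0)]; auto; lra. }
  set (a1 := Rmax a a0). set (x0 := (a1 + b) / 2).
  assert (Ha1 : a0 <= a1 /\ a <= a1 /\ a1 < b)
    by (unfold a1; repeat split; [apply Rmax_r | apply Rmax_l | apply Rmax_lub_lt; lra]).
  set (M := (k ^ 2 / a0 + Rabs (lam + m) * b) / s).
  assert (HM0 : 0 <= M).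
  { unfold M. apply Rdiv_le_0_compat; [|lra]. pose proof (Rabs_pos (lam + m)).
    assert (0 <= k ^ 2 / a0) by (apply Rdiv_le_0_compat; [apply pow2_ge_0 | lra]). nra. }
  set (df t := (k ^ 2 / t - (lam + m) * t) * f t / s).
  assert (Hd : forall t, a1 < t < b -> is_derive (fun t => t * Derive f t) t (df t)).
  { intros t Ht. apply radial_flux_derive; [lra | lra | apply Hrad; lra]. }
  assert (Hdf : forall t, a1 < t < b -> Rabs (df t) <= M).
  { intros t Ht.
    assert (Hkt : 0 <= k ^ 2 / t <= k ^ 2 / a0).
    { split; [apply Rdiv_le_0_compat; [apply pow2_ge_0 | lra]|].
      apply Rmult_le_compat_l; [apply pow2_ge_0 | apply Rinv_le_contravar; lra]. }
    assert (Hlt : Rabs ((lam + m) * t) <= Rabs (lam + m) * b).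
    { rewrite Rabs_mult, (Rabs_right t) by lra.
      apply Rmult_le_compat_l; [apply Rabs_pos | lra]. }
    apply Rabs_le_between in Hlt. specialize (Ha t ltac:(lra)).
    set (X := k ^ 2 / a0 + Rabs (lam + m) * b).
    assert (-X <= (k ^ 2 / t - (lam + m) * t) * f t <= X) by (unfold X in *; nra).
    assert (0 <= / s) by (apply Rlt_le, Rinv_0_lt_compat; lra).
    change M with (X / s). unfold df. apply Rabs_le.
    replace (- (X / s)) with (- X / s) by (field; lra).
    split; apply Rmult_le_compat_r; lra. }
  exists (Rabs (x0 * Derive f x0) + M * b).
  apply (at_left_of_interval x0 b); [unfold x0; lra|]. intros t Ht.
  assert (M * (t - x0) <= M * b) by (apply Rmult_le_compat_l; unfold x0 in *; lra).
  enough (Rabs (t * Derive f t) <= Rabs (x0 * Derive f x0) + M * (t - x0)) by lra.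
  apply (abs_le_of_deriv_bounded (fun t => t * Derive f t) df a1 b); auto;
    try (unfold x0 in *; lra).
  intros s' Hs'. apply Hdf. unfold x0 in *. lra.
Qed.

(** * The eigenfunction u and the solution z *)

Definition flux_ratio_bound (Rad kappa r0 : R) : R :=
  (kappa * Rad ^ 2 + Rad / (Rad - r0)) / r0.

(* Any alpha_bar with alpha_bar * (r0 G^2 + G (Rad - r0) / r0) < r0 would do. *)
Definition alpha_bar (Rad kappa r0 : R) : R :=
  let G := flux_ratio_bound Rad kappa r0 in
  r0 / (r0 * G ^ 2 + G * (Rad - r0) / r0 + 1).

Lemma flux_ratio_bound_pos (Rad kappa r0 : R) :
  0 < r0 < Rad -> 0 < kappa -> 0 < flux_ratio_bound Rad kappa r0.
Proof.
  intros Hr Hk. unfold flux_ratio_bound.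
  apply Rdiv_lt_0_compat; [|lra].
  assert (0 < Rad / (Rad - r0)) by (apply Rdiv_lt_0_compat; lra). nra.
Qed.

Lemma alpha_bar_pos (Rad kappa r0 : R) :
  0 < r0 < Rad -> 0 < kappa -> 0 < alpha_bar Rad kappa r0.
Proof.
  intros Hr Hk. pose proof (flux_ratio_bound_pos Rad kappa r0 Hr Hk) as HG.
  unfold alpha_bar. apply Rdiv_lt_0_compat; [lra|].
  set (G := flux_ratio_bound Rad kappa r0) in *.
  assert (0 <= G * (Rad - r0) / r0) by (apply Rdiv_le_0_compat; nra).
  assert (0 <= r0 * G ^ 2) by (apply Rmult_le_pos; [lra | apply pow2_ge_0]). lra.
Qed.

Lemma jump_terms_small (r0 rho G u0 d tau alpha kappa : R) :
  0 < r0 -> 0 <= rho -> 0 < u0 -> 0 < kappa -> 0 <= alpha ->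
  0 <= d <= G * u0 -> 0 <= tau <= alpha * kappa ->
  alpha * (r0 * G ^ 2 + G * rho) < r0 ->
  r0 * (d ^ 2 * tau) + u0 * (d * tau) * rho < r0 * (kappa * u0 ^ 2).
Proof.
  intros Hr0 Hrho Hu0 Hk Ha Hd Ht Hsmall.
  assert (HG : 0 <= G) by nra.
  assert (Hd2 : d ^ 2 * tau <= G ^ 2 * u0 ^ 2 * (alpha * kappa)).
  { apply Rmult_le_compat; [nra | lra | | lra].
    replace (G ^ 2 * u0 ^ 2) with ((G * u0) ^ 2) by ring. apply pow_incr. lra. }
  assert (Hd1 : d * tau <= G * u0 * (alpha * kappa)) by (apply Rmult_le_compat; lra).
  assert (u0 * (d * tau) * rho <= u0 * (G * u0 * (alpha * kappa)) * rho).
  { apply Rmult_le_compat_r; [lra|]. apply Rmult_le_compat_l; lra. }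
  assert (kappa * u0 ^ 2 * (alpha * (r0 * G ^ 2 + G * rho)) < kappa * u0 ^ 2 * r0).
  { apply Rmult_lt_compat_l; [|lra]. apply Rmult_lt_0_compat; [lra | apply pow_lt; lra]. }
  nra.
Qed.

Section RadialProblem.
Variables (Rad kappa r0 alpha lam di de : R) (u : R -> R).
Hypothesis r0_pos : 0 < r0.
Hypothesis r0_lt_Rad : r0 < Rad.
Hypothesis kappa_pos : 0 < kappa.
Hypothesis alpha_nonneg : 0 <= alpha.
Hypothesis u_radial : forall r, 0 < r < Rad -> r <> r0 ->
  radial_eq_at (sigma alpha kappa r0 r) (mstar kappa r0 r) lam 0 u r.
Hypothesis u_lim_0 : filterlim u (at_right 0) (locally (u 0)).
Hypothesis u_cont_r0 : continuous u r0.
Hypothesis u_lim_Rad : filterlim u (at_left Rad) (locally 0).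
Hypothesis u_pos : forall r, 0 <= r < Rad -> 0 < u r.
Hypothesis sigma_du_left :
  filterlim (fun r => sigma alpha kappa r0 r * Derive u r) (at_left r0) (locally di).
Hypothesis sigma_du_right :
  filterlim (fun r => sigma alpha kappa r0 r * Derive u r) (at_right r0) (locally de).
Hypothesis sigma_du_continuous : de = di.

Let si := 1 + alpha * kappa.

Lemma si_ge_1 : 1 <= si.
Proof. unfold si. nra. Qed.

Lemma u_derive r : 0 < r < Rad -> r <> r0 -> is_derive u r (Derive u r).
Proof. intros Hr Hr0. apply Derive_correct, (u_radial r Hr Hr0). Qed.

Lemma u_flux_derive_in r :
  0 < r < r0 -> is_derive (fun t => t * Derive u t) r (- (lam + kappa) * r * u r / si).
Proof.
  intros Hr. pose proof si_ge_1.
  pose proof (u_radial r ltac:(lra) ltac:(lra)) as Hu.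
  rewrite sigma_in, mstar_in in Hu by lra.
  replace (- (lam + kappa) * r * u r / si) with ((0 ^ 2 / r - (lam + kappa) * r) * u r / si)
    by (unfold si in *; field; repeat split; lra).
  apply radial_flux_derive; [lra | unfold si in *; lra | exact Hu].
Qed.

Lemma u_flux_derive_out r :
  r0 < r < Rad -> is_derive (fun t => t * Derive u t) r (- lam * r * u r).
Proof.
  intros Hr.
  pose proof (u_radial r ltac:(lra) ltac:(lra)) as Hu.
  rewrite sigma_out, mstar_out in Hu by lra.
  replace (- lam * r * u r) with ((0 ^ 2 / r - (lam + 0) * r) * u r / 1) by (field; lra).
  apply radial_flux_derive; [lra | lra | exact Hu].
Qed.

Lemma u_flux_lim_in :
  filterlim (fun t => t * Derive u t) (at_left r0) (locally (r0 * di / si)).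
Proof.
  pose proof si_ge_1.
  apply (filterlim_ext_loc (fun t => t / si * (sigma alpha kappa r0 t * Derive u t))).
  - apply (at_left_of_interval 0 r0); [lra|]. intros t Ht.
    rewrite sigma_in by lra. unfold si in *. field. lra.
  - replace (r0 * di / si) with (r0 / si * di) by (field; lra).
    apply lim_mult; [| exact sigma_du_left].
    apply (lim_mult (fun t => t) (fun _ => / si)); [apply lim_id_at_left | apply filterlim_const].
Qed.

Lemma u_flux_lim_out :
  filterlim (fun t => t * Derive u t) (at_right r0) (locally (r0 * di)).
Proof.
  apply (filterlim_ext_loc (fun t => t * (sigma alpha kappa r0 t * Derive u t))).
  - apply (at_right_of_interval r0 Rad); [lra|]. intros t Ht.
    rewrite sigma_out by lra. ring.
  - rewrite <- sigma_du_continuous. apply lim_mult; [apply lim_id_at_right | exact sigma_du_right].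
Qed.

Lemma u_not_nondecreasing_near_Rad a :
  r0 <= a < Rad -> ~ (forall t, a < t < Rad -> 0 <= Derive u t).
Proof.
  intros Ha Hd.
  set (r := (a + Rad) / 2).
  assert (u r <= 0 - 0 * (Rad - r)).
  { apply (deriv_ge_lim_right u (Derive u) a Rad); auto; [|unfold r; lra].
    intros t Ht. apply u_derive; lra. }
  pose proof (u_pos r ltac:(unfold r; lra)). lra.
Qed.

Lemma u_flux_in_nonpos : 0 <= lam + kappa -> forall r, 0 < r < r0 -> r * Derive u r <= 0.
Proof.
  intros Hl r Hr. destruct (Rle_lt_dec (r * Derive u r) 0) as [| Hc]; auto; exfalso.
  assert (Hflux : forall t, 0 < t < r -> r * Derive u r <= t * Derive u t).
  { intros t Ht.
    enough (r * Derive u r - t * Derive u t <= 0 * (r - t)) by lra.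
    apply (deriv_le_bound (fun t => t * Derive u t) _ 0 r0 0 t r u_flux_derive_in); try lra.
    intros s Hs. pose proof si_ge_1. pose proof (u_pos s ltac:(lra)).
    enough (0 <= (lam + kappa) * s * u s / si) by lra.
    apply Rdiv_le_0_compat; [apply Rmult_le_pos; [apply Rmult_le_pos|] | unfold si in *]; lra. }
  pose proof (lim_m_infty_at_0_of_t_deriv_ge u (Derive u) r (r * Derive u r)
    ltac:(lra) Hc ltac:(intros; apply u_derive; lra) Hflux) as Hinf.
  destruct (at_right_witness 0 Rad _ ltac:(lra)
    (Hinf (fun y => y < 0) (ex_intro _ 0 (fun y H => H)))) as [t [Ht Hut]].
  pose proof (u_pos t ltac:(lra)). lra.
Qed.

Lemma u_flux_in_nonneg : lam + kappa <= 0 -> forall r, 0 < r < r0 -> 0 <= r * Derive u r.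
Proof.
  intros Hl r Hr. destruct (Rle_lt_dec 0 (r * Derive u r)) as [| Hc]; auto; exfalso.
  assert (Hflux : forall t, 0 < t < r -> - (r * Derive u r) <= t * - Derive u t).
  { intros t Ht.
    enough (0 * (r - t) <= r * Derive u r - t * Derive u t) by lra.
    apply (deriv_ge_bound (fun t => t * Derive u t) _ 0 r0 0 t r u_flux_derive_in); try lra.
    intros s Hs. pose proof si_ge_1. pose proof (u_pos s ltac:(lra)).
    enough (0 <= - (lam + kappa) * s * u s / si) by lra.
    apply Rdiv_le_0_compat; [apply Rmult_le_pos; [apply Rmult_le_pos|] | unfold si in *]; lra. }
  pose proof (lim_m_infty_at_0_of_t_deriv_ge (fun t => - u t) (fun t => - Derive u t) r
    (- (r * Derive u r)) ltac:(lra) ltac:(lra)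
    ltac:(intros t Ht; exact (is_derive_opp _ _ _ (u_derive t ltac:(lra) ltac:(lra))))
    Hflux) as Hinf.
  assert (Hbig : at_right 0 (fun t => - u t < - (u 0 + 1)))
    by exact (Hinf _ (ex_intro _ _ (fun y H => H))).
  assert (Hsmall : at_right 0 (fun t => u t < u 0 + 1))
    by (apply (ev_lt_of_lim _ u (u 0)); auto; lra).
  destruct (filter_ex _ (filter_and _ _ Hbig Hsmall)) as [t [H1 H2]]. lra.
Qed.

Lemma lam_kappa_pos : 0 < lam + kappa.
Proof.
  destruct (Rlt_le_dec 0 (lam + kappa)) as [| Hl]; auto; exfalso.
  assert (Hdi : 0 <= di).
  { assert (0 <= r0 * di / si).
    { apply (lim_ge_of_ev _ _ _ 0 u_flux_lim_in).
      apply (at_left_of_interval 0 r0); [lra|]. exact (u_flux_in_nonneg Hl). }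
    pose proof si_ge_1.
    apply (Rmult_le_reg_l (r0 / si)); [apply Rdiv_lt_0_compat; lra|].
    replace (r0 / si * di) with (r0 * di / si) by (field; lra). lra. }
  apply (u_not_nondecreasing_near_Rad r0); [lra|]. intros t Ht.
  assert (Hflux : r0 * di + 0 * (t - r0) <= t * Derive u t).
  { apply (deriv_ge_lim_left (fun t => t * Derive u t) (fun s => - lam * s * u s) r0 Rad);
      auto using u_flux_lim_out.
    - intros s Hs. apply u_flux_derive_out. lra.
    - intros s Hs. pose proof (u_pos s ltac:(lra)).
      assert (0 < s * u s) by nra. nra. }
  nra.
Qed.

Lemma di_nonpos : di <= 0.
Proof.
  assert (r0 * di / si <= 0).
  { apply (lim_le_of_ev _ _ _ 0 u_flux_lim_in).
    apply (at_left_of_interval 0 r0); [lra|].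
    apply u_flux_in_nonpos. pose proof lam_kappa_pos. lra. }
  pose proof si_ge_1.
  apply (Rmult_le_reg_l (r0 / si)); [apply Rdiv_lt_0_compat; lra|].
  replace (r0 / si * di) with (r0 * di / si) by (field; lra). lra.
Qed.

Lemma u_derive_out_nonpos r : r0 < r < Rad -> Derive u r <= 0.
Proof.
  intros Hr. destruct (Rle_lt_dec 0 lam) as [Hl | Hl].
  - assert (Hflux : r * Derive u r <= r0 * di + 0 * (r - r0)).
    { apply (deriv_le_lim_left (fun t => t * Derive u t) (fun s => - lam * s * u s) r0 Rad);
      auto using u_flux_lim_out.
      - intros s Hs. apply u_flux_derive_out. lra.
      - intros s Hs. pose proof (u_pos s ltac:(lra)).
        assert (0 < s * u s) by nra. nra. }
    pose proof di_nonpos. nra.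
  - destruct (Rle_lt_dec (Derive u r) 0) as [| Hd]; auto; exfalso.
    apply (u_not_nondecreasing_near_Rad r); [lra|]. intros t Ht.
    assert (Hflux : 0 * (t - r) <= t * Derive u t - r * Derive u r).
    { apply (deriv_ge_bound (fun t => t * Derive u t) _ r0 Rad 0 r t u_flux_derive_out); try lra.
      intros s Hs. pose proof (u_pos s ltac:(lra)).
      assert (0 < s * u s) by nra. nra. }
    nra.
Qed.

Lemma u_le_u_r0_out r : r0 < r < Rad -> u r <= u r0.
Proof.
  intros Hr.
  enough (u r <= u r0 + 0 * (r - r0)) by lra.
  apply (deriv_le_lim_left u (Derive u) r0 Rad); auto using continuous_at_right.
  - intros t Ht. apply u_derive; lra.
  - intros t Ht. apply u_derive_out_nonpos. lra.
Qed.

Lemma u_flux_out_upper r :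
  r0 < r < Rad -> r * Derive u r <= r0 * di + kappa * Rad ^ 2 * u r0.
Proof.
  intros Hr. pose proof (u_pos r0 ltac:(lra)) as Hu0. pose proof lam_kappa_pos.
  assert (r * Derive u r <= r0 * di + kappa * Rad * u r0 * (r - r0)).
  { apply (deriv_le_lim_left (fun t => t * Derive u t) (fun s => - lam * s * u s) r0 Rad);
      auto using u_flux_lim_out.
    - intros s Hs. apply u_flux_derive_out. lra.
    - intros s Hs. pose proof (u_pos s ltac:(lra)). pose proof (u_le_u_r0_out s Hs).
      assert (s * u s <= Rad * u r0) by (apply Rmult_le_compat; lra).
      assert (0 < s * u s) by nra.
      assert (- lam * (s * u s) <= kappa * (s * u s)) by nra.
      assert (kappa * (s * u s) <= kappa * (Rad * u r0)) by nra. nra. }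
  assert (kappa * Rad * u r0 * (r - r0) <= kappa * Rad * u r0 * Rad).
  { apply Rmult_le_compat_l; [|lra]. apply Rmult_le_pos; [|lra]. nra. }
  replace (kappa * Rad ^ 2 * u r0) with (kappa * Rad * u r0 * Rad) by ring. lra.
Qed.

Lemma di_bound : - di <= flux_ratio_bound Rad kappa r0 * u r0.
Proof.
  pose proof (u_pos r0 ltac:(lra)) as Hu0.
  pose proof u_flux_out_upper as Hflux. set (u0 := u r0) in *.
  set (K := - r0 * di - kappa * Rad ^ 2 * u0).
  (* If K > 0 then u' <= -K/Rad on (r0, Rad), while u only drops by u(r0) there. *)
  assert (HK : K <= u0 * Rad / (Rad - r0)).
  { destruct (Rle_lt_dec K 0) as [HK | HK].
    { enough (0 <= u0 * Rad / (Rad - r0)) by lra. apply Rdiv_le_0_compat; nra. }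
    assert (Hdu : - u0 <= - K / Rad * (Rad - r0)).
    { replace (- u0) with (0 - u0) by ring.
      apply (deriv_le_lim_both u (Derive u) r0 Rad); auto using continuous_at_right.
      - intros t Ht. apply u_derive; lra.
      - intros t Ht. specialize (Hflux t Ht). pose proof (u_derive_out_nonpos t Ht).
        apply (Rmult_le_reg_l Rad); [lra|]. field_simplify; [|lra]. unfold K in *. nra. }
    apply (Rmult_le_reg_r ((Rad - r0) / Rad)); [apply Rdiv_lt_0_compat; lra|].
    replace (u0 * Rad / (Rad - r0) * ((Rad - r0) / Rad)) with u0 by (field; lra).
    replace (- K / Rad * (Rad - r0)) with (- (K * ((Rad - r0) / Rad))) in Hdu
      by (field; lra). lra. }
  unfold flux_ratio_bound.
  apply (Rmult_le_reg_l r0); [lra|].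
  replace (r0 * ((kappa * Rad ^ 2 + Rad / (Rad - r0)) / r0 * u0))
    with (kappa * Rad ^ 2 * u0 + u0 * Rad / (Rad - r0)) by (field; lra).
  unfold K in HK. lra.
Qed.

Variables (zi ze szi sze dui due : R) (z : R -> R).
Hypothesis z_radial : forall r, 0 < r < Rad -> r <> r0 ->
  radial_eq_at (sigma alpha kappa r0 r) (mstar kappa r0 r) lam 1 z r.
Hypothesis z_lim_left : filterlim z (at_left r0) (locally zi).
Hypothesis z_lim_right : filterlim z (at_right r0) (locally ze).
Hypothesis sigma_dz_left :
  filterlim (fun r => sigma alpha kappa r0 r * Derive z r) (at_left r0) (locally szi).
Hypothesis sigma_dz_right :
  filterlim (fun r => sigma alpha kappa r0 r * Derive z r) (at_right r0) (locally sze).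
Hypothesis du_left : filterlim (Derive u) (at_left r0) (locally dui).
Hypothesis du_right : filterlim (Derive u) (at_right r0) (locally due).
Hypothesis sigma_dz_jump : sze - szi = - kappa * u r0.
Hypothesis z_jump : ze - zi = - (due - dui).
Hypothesis z_lim_0 : filterlim z (at_right 0) (locally 0).
Hypothesis z_lim_Rad : filterlim z (at_left Rad) (locally 0).

Let W t := t * (u t * (sigma alpha kappa r0 t * Derive z t)
                - z t * (sigma alpha kappa r0 t * Derive u t)).
Let q t := z t / u t.
Let P t := / (sigma alpha kappa r0 t * t * u t ^ 2).
Let Q t := u t ^ 2 / t.

Lemma z_eq_q_u t : 0 <= t < Rad -> z t = q t * u t.
Proof. intros Ht. pose proof (u_pos t Ht). unfold q. field. lra. Qed.

Lemma P_pos t : 0 < t < Rad -> 0 < P t.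
Proof.
  intros Ht. pose proof (u_pos t ltac:(lra)).
  pose proof (sigma_pos alpha kappa r0 t alpha_nonneg ltac:(lra)).
  unfold P. apply Rinv_0_lt_compat, Rmult_lt_0_compat; [nra | apply pow_lt; lra].
Qed.

Lemma Q_pos t : 0 < t < Rad -> 0 < Q t.
Proof.
  intros Ht. pose proof (u_pos t ltac:(lra)).
  unfold Q. apply Rdiv_lt_0_compat; [apply pow_lt|]; lra.
Qed.

Lemma q_derive r : 0 < r < Rad -> r <> r0 -> is_derive q r (P r * W r).
Proof.
  intros Hr Hr0. pose proof (u_pos r ltac:(lra)).
  pose proof (sigma_pos alpha kappa r0 r alpha_nonneg ltac:(lra)).
  replace (P r * W r) with ((Derive z r * u r - z r * Derive u r) / u r ^ 2)
    by (unfold P, W; field; repeat split; lra).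
  apply is_derive_div; [| apply u_derive |]; auto; [|lra].
  apply Derive_correct, (z_radial r Hr Hr0).
Qed.

Lemma W_derive r : 0 < r < Rad -> r <> r0 -> is_derive W r (Q r * q r).
Proof.
  intros Hr Hr0. pose proof (u_pos r ltac:(lra)).
  set (s := sigma alpha kappa r0 r).
  assert (Hs : 0 < s) by (apply sigma_pos; lra).
  replace (Q r * q r) with ((1 ^ 2 - 0 ^ 2) / r * u r * z r) by (unfold Q, q; field; lra).
  apply (is_derive_ext_loc (fun t => s * (u t * (t * Derive z t) - z t * (t * Derive u t)))).
  - apply (filter_imp (fun t => sigma alpha kappa r0 t = s)); [| apply sigma_locally_const, Hr0].
    intros t Ht. unfold W. rewrite Ht.
    (* The equation is stated in [R_NormedModule]; [ring] needs it in [R]. *)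
    match goal with |- ?x = ?y => change (@eq R x y) end. ring.
  - apply (radial_wronskian_derive s (mstar kappa r0 r) lam 0 1); [lra | lra | |];
      [exact (u_radial r Hr Hr0) | exact (z_radial r Hr Hr0)].
Qed.

Lemma W_lim_left : filterlim W (at_left r0) (locally (r0 * (u r0 * szi - zi * di))).
Proof.
  apply lim_mult; [apply lim_id_at_left|].
  apply lim_minus; apply lim_mult; auto using continuous_at_left.
Qed.

Lemma W_lim_right : filterlim W (at_right r0) (locally (r0 * (u r0 * sze - ze * di))).
Proof.
  apply lim_mult; [apply lim_id_at_right|].
  rewrite <- sigma_du_continuous.
  apply lim_minus; apply lim_mult; auto using continuous_at_right.
Qed.

Lemma W_lim_Rad : filterlim W (at_left Rad) (locally 0).
Proof.
  assert (Hext : forall (k : R) f, (forall r, 0 < r < Rad -> r <> r0 ->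
      radial_eq_at (sigma alpha kappa r0 r) (mstar kappa r0 r) lam k f r) ->
      forall r, r0 < r < Rad -> radial_eq_at 1 0 lam k f r).
  { intros k f Hf r Hr. specialize (Hf r ltac:(lra) ltac:(lra)).
    now rewrite sigma_out, mstar_out in Hf by lra. }
  destruct (radial_flux_bounded_at_left 1 0 lam 0 r0 Rad u ltac:(lra) ltac:(lra)
    (Hext 0 u u_radial) u_lim_Rad) as [Cu HCu].
  destruct (radial_flux_bounded_at_left 1 0 lam 1 r0 Rad z ltac:(lra) ltac:(lra)
    (Hext 1 z z_radial) z_lim_Rad) as [Cz HCz].
  apply (lim_0_of_dominated u z W (Rabs Cz + Rabs Cu) u_lim_Rad z_lim_Rad).
  generalize (filter_and _ _ (filter_and _ _ HCu HCz)
    (at_left_of_interval r0 Rad (fun t => r0 < t) r0_lt_Rad (fun t Ht => proj1 Ht))).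
  apply filter_imp. intros t [[Hu Hz] Ht].
  unfold W. rewrite sigma_out by lra.
  replace (t * (u t * (1 * Derive z t) - z t * (1 * Derive u t)))
    with (u t * (t * Derive z t) - z t * (t * Derive u t)) by ring.
  eapply Rle_trans; [apply Rabs_triang|].
  rewrite Rabs_Ropp, (Rabs_mult (u t)), (Rabs_mult (z t)).
  pose proof (Rabs_pos (u t)). pose proof (Rabs_pos (z t)).
  pose proof (Rle_abs Cu). pose proof (Rle_abs Cz).
  pose proof (Rabs_pos Cu). pose proof (Rabs_pos Cz). nra.
Qed.

Lemma system_in t : 0 < t < r0 ->
  is_derive q t (P t * W t) /\ is_derive W t (Q t * q t) /\ 0 < P t /\ 0 < Q t.
Proof.
  intros Ht. split; [|split; [|split]];
    [apply q_derive | apply W_derive | apply P_pos | apply Q_pos]; lra.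
Qed.

Lemma system_out t : r0 < t < Rad ->
  is_derive q t (P t * W t) /\ is_derive W t (Q t * q t) /\ 0 < P t /\ 0 < Q t.
Proof.
  intros Ht. split; [|split; [|split]];
    [apply q_derive | apply W_derive | apply P_pos | apply Q_pos]; lra.
Qed.

Lemma q_neg_of_z_neg t : 0 <= t < Rad -> z t < 0 -> q t < 0.
Proof. intros Ht Hz. pose proof (u_pos t Ht). unfold q. apply Rdiv_neg_pos; lra. Qed.

Lemma left_limits_neg_of_z_neg_inside r1 :
  0 < r1 < r0 -> z r1 < 0 -> zi < 0 /\ r0 * (u r0 * szi - zi * di) < 0.
Proof.
  intros Hr1 Hz1. pose proof (q_neg_of_z_neg r1 ltac:(lra) Hz1) as Hq1.
  destruct (Rle_lt_dec (W r1) 0) as [HW | HW].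
  - pose proof (sign_forward 0 r0 q W P Q system_in r1 Hr1 Hq1 HW) as F.
    set (r2 := (r1 + r0) / 2).
    assert (Hq : forall y, r1 <= y < r0 -> z y <= q r1 * u y).
    { intros y Hy. rewrite z_eq_q_u by lra. pose proof (u_pos y ltac:(lra)).
      enough (q y <= q r1) by nra.
      apply (q_le_of_W_nonpos 0 r0 q W P Q system_in); try lra.
      intros t Ht. destruct (Req_dec t r1) as [-> | ]; [lra|]. apply Rlt_le, F. lra. }
    split.
    + enough (zi <= q r1 * u r0) by (pose proof (u_pos r0 ltac:(lra)); nra).
      apply (lim_le_scaled (at_left r0) z u); [exact z_lim_left | now apply continuous_at_left|].
      apply (at_left_of_interval r1 r0); [lra|]. intros y Hy. apply Hq. lra.
    + enough (r0 * (u r0 * szi - zi * di) <= W r2)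
        by (pose proof (F r2 ltac:(unfold r2; lra)); lra).
      apply (lim_le_of_ev _ W _ _ W_lim_left).
      apply (at_left_of_interval r2 r0); [unfold r2; lra|]. intros y Hy.
      apply (W_le_of_q_nonpos 0 r0 q W P Q system_in); try (unfold r2 in *; lra).
      intros t Ht. apply Rlt_le, F. unfold r2 in *. lra.
  - exfalso. pose proof (sign_backward 0 r0 q W P Q system_in r1 Hr1 Hq1 (Rlt_le _ _ HW)) as B.
    enough (0 <= q r1 * u 0) by (pose proof (u_pos 0 ltac:(lra)); nra).
    apply (lim_le_scaled (at_right 0) z u); [exact z_lim_0 | exact u_lim_0 |].
    apply (at_right_of_interval 0 r1); [lra|]. intros y Hy.
    rewrite z_eq_q_u by lra. pose proof (u_pos y ltac:(lra)).
    enough (q y <= q r1) by nra.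
    apply (q_ge_of_W_nonneg 0 r0 q W P Q system_in); try lra.
    intros t Ht. destruct (Req_dec t r1) as [-> | ]; [lra|]. apply Rlt_le, B. lra.
Qed.

Lemma not_z_neg_W_nonpos_out r1 :
  r0 < r1 < Rad -> z r1 < 0 -> W r1 <= 0 -> False.
Proof.
  intros Hr1 Hz1 HW.
  pose proof (sign_forward r0 Rad q W P Q system_out r1 Hr1
    (q_neg_of_z_neg r1 ltac:(lra) Hz1) HW) as F.
  set (r2 := (r1 + Rad) / 2).
  enough (0 <= W r2) by (pose proof (F r2 ltac:(unfold r2; lra)); lra).
  apply (lim_le_of_ev _ W _ _ W_lim_Rad).
  apply (at_left_of_interval r2 Rad); [unfold r2; lra|]. intros y Hy.
  apply (W_le_of_q_nonpos r0 Rad q W P Q system_out); try (unfold r2 in *; lra).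
  intros t Ht. apply Rlt_le, F. unfold r2 in *. lra.
Qed.

Lemma z_nonneg_out_of_ze_nonneg : 0 <= ze -> forall r, r0 < r < Rad -> 0 <= z r.
Proof.
  intros Hze r1 Hr1. destruct (Rle_lt_dec 0 (z r1)) as [| Hz1]; auto; exfalso.
  destruct (Rle_lt_dec (W r1) 0) as [HW | HW].
  { exact (not_z_neg_W_nonpos_out r1 Hr1 Hz1 HW). }
  pose proof (q_neg_of_z_neg r1 ltac:(lra) Hz1) as Hq1.
  pose proof (sign_backward r0 Rad q W P Q system_out r1 Hr1 Hq1 (Rlt_le _ _ HW)) as B.
  enough (ze <= q r1 * u r0) by (pose proof (u_pos r0 ltac:(lra)); nra).
  apply (lim_le_scaled (at_right r0) z u); [exact z_lim_right | now apply continuous_at_right|].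
  apply (at_right_of_interval r0 r1); [lra|]. intros y Hy.
  rewrite z_eq_q_u by lra. pose proof (u_pos y ltac:(lra)).
  enough (q y <= q r1) by nra.
  apply (q_ge_of_W_nonneg r0 Rad q W P Q system_out); try lra.
  intros t Ht. destruct (Req_dec t r1) as [-> | ]; [lra|]. apply Rlt_le, B. lra.
Qed.

Lemma W_nonpos_out : 0 <= ze -> forall r, r0 < r < Rad -> W r <= 0.
Proof.
  intros Hze r Hr.
  enough (W r <= 0 - 0 * (Rad - r)) by lra.
  apply (deriv_ge_lim_right W (fun t => Q t * q t) r0 Rad
           (W_derive_on r0 Rad q W P Q system_out)); [| exact W_lim_Rad | lra].
  intros t Ht. pose proof (Q_pos t ltac:(lra)).
  pose proof (z_nonneg_out_of_ze_nonneg Hze t Ht). pose proof (u_pos t ltac:(lra)).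
  assert (0 <= q t) by (unfold q; apply Rdiv_le_0_compat; lra). nra.
Qed.

Lemma z_le_ze_out : 0 <= ze -> forall r, r0 < r < Rad -> z r <= ze.
Proof.
  intros Hze r Hr.
  pose proof (u_pos r ltac:(lra)). pose proof (u_pos r0 ltac:(lra)).
  assert (Hqr : q r * u r0 <= ze).
  { apply (lim_ge_scaled (at_right r0) z u); [exact z_lim_right | now apply continuous_at_right|].
    apply (at_right_of_interval r0 r); [lra|]. intros y Hy.
    rewrite z_eq_q_u by lra. pose proof (u_pos y ltac:(lra)).
    enough (q r <= q y) by nra.
    apply (q_le_of_W_nonpos r0 Rad q W P Q system_out); try lra.
    intros t Ht. apply W_nonpos_out; lra. }
  pose proof (z_nonneg_out_of_ze_nonneg Hze r Hr).
  assert (0 <= q r) by (unfold q; apply Rdiv_le_0_compat; lra).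
  pose proof (u_le_u_r0_out r Hr).
  rewrite z_eq_q_u by lra. nra.
Qed.

Lemma W_lim_right_lower_bound :
  0 <= ze -> - (u r0 * ze / r0) * (Rad - r0) <= r0 * (u r0 * sze - ze * di).
Proof.
  intros Hze.
  enough (0 - r0 * (u r0 * sze - ze * di) <= u r0 * ze / r0 * (Rad - r0)) by lra.
  apply (deriv_le_lim_both W (fun t => Q t * q t) r0 Rad
           (W_derive_on r0 Rad q W P Q system_out)); [lra | | exact W_lim_right | exact W_lim_Rad].
  intros t Ht. pose proof (u_pos t ltac:(lra)). pose proof (u_pos r0 ltac:(lra)).
  pose proof (z_nonneg_out_of_ze_nonneg Hze t Ht). pose proof (z_le_ze_out Hze t Ht).
  pose proof (u_le_u_r0_out t Ht).
  replace (Q t * q t) with (u t * z t / t) by (unfold Q, q; field; lra).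
  apply (Rmult_le_reg_r (t * r0)); [nra|].
  replace (u t * z t / t * (t * r0)) with (u t * z t * r0) by (field; lra).
  replace (u r0 * ze / r0 * (t * r0)) with (u r0 * ze * t) by (field; lra).
  assert (u t * z t <= u r0 * ze) by (apply Rmult_le_compat; lra).
  assert (0 <= u t * z t) by nra. nra.
Qed.

Lemma dui_eq : dui = di / si.
Proof.
  pose proof si_ge_1.
  apply (lim_unique (at_left r0) (Derive u)); [exact du_left|].
  apply (filterlim_ext_loc (fun t => / si * (sigma alpha kappa r0 t * Derive u t))).
  - apply (at_left_of_interval 0 r0); [lra|]. intros t Ht.
    rewrite sigma_in by lra. unfold si in *. field. lra.
  - replace (di / si) with (/ si * di) by (unfold Rdiv; ring).
    apply lim_mult; [apply filterlim_const | exact sigma_du_left].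
Qed.

Lemma due_eq : due = di.
Proof.
  apply (lim_unique (at_right r0) (Derive u)); [exact du_right|].
  rewrite <- sigma_du_continuous.
  apply (filterlim_ext_loc (fun t => sigma alpha kappa r0 t * Derive u t)); [|exact sigma_du_right].
  apply (at_right_of_interval r0 Rad); [lra|]. intros t Ht.
  rewrite sigma_out by lra. ring.
Qed.

Let tau := alpha * kappa / si.

Lemma tau_bounds : 0 <= tau <= alpha * kappa.
Proof.
  pose proof si_ge_1. unfold tau. split.
  - apply Rdiv_le_0_compat; nra.
  - apply (Rmult_le_reg_r si); [lra|]. unfold Rdiv.
    rewrite Rmult_assoc, Rinv_l by lra.
    assert (0 <= alpha * kappa) by nra. nra.
Qed.

Lemma ze_eq : ze = zi - di * tau.
Proof.
  pose proof si_ge_1. rewrite dui_eq, due_eq in z_jump.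
  unfold tau. unfold si in *.
  replace (zi - di * (alpha * kappa / (1 + alpha * kappa)))
    with (zi - (di - di / (1 + alpha * kappa))) by (field; lra). lra.
Qed.

Lemma W_jump : r0 * (u r0 * sze - ze * di)
  = r0 * (u r0 * szi - zi * di) + r0 * (di ^ 2 * tau - kappa * u r0 ^ 2).
Proof.
  replace sze with (szi - kappa * u r0) by lra. rewrite ze_eq. ring.
Qed.

Hypothesis alpha_le_bar : alpha <= alpha_bar Rad kappa r0.

Lemma alpha_small :
  let G := flux_ratio_bound Rad kappa r0 in
  alpha * (r0 * G ^ 2 + G * ((Rad - r0) / r0)) < r0.
Proof.
  intros G.
  assert (HG : 0 < G) by (apply flux_ratio_bound_pos; lra).
  set (Y := r0 * G ^ 2 + G * ((Rad - r0) / r0)).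
  assert (HY : 0 <= Y).
  { unfold Y. assert (0 <= (Rad - r0) / r0) by (apply Rdiv_le_0_compat; lra).
    assert (0 <= r0 * G ^ 2) by (apply Rmult_le_pos; [lra | apply pow2_ge_0]). nra. }
  assert (Hbar : alpha_bar Rad kappa r0 = r0 / (Y + 1)).
  { unfold alpha_bar, Y. fold G. f_equal. field. lra. }
  assert (alpha * Y <= r0 / (Y + 1) * Y) by (rewrite <- Hbar; apply Rmult_le_compat_r; lra).
  assert (r0 / (Y + 1) * Y < r0).
  { apply (Rmult_lt_reg_r (Y + 1)); [lra|].
    replace (r0 / (Y + 1) * Y * (Y + 1)) with (r0 * Y) by (field; lra). nra. }
  lra.
Qed.

Lemma z_nonneg_inside r1 : 0 < r1 < r0 -> 0 <= z r1.
Proof.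
  intros Hr1. destruct (Rle_lt_dec 0 (z r1)) as [| Hz1]; auto; exfalso.
  destruct (left_limits_neg_of_z_neg_inside r1 Hr1 Hz1) as [Hzi HWi].
  pose proof (u_pos r0 ltac:(lra)) as Hu0.
  pose proof di_nonpos. pose proof di_bound. pose proof tau_bounds.
  assert (Hrho : 0 < (Rad - r0) / r0) by (apply Rdiv_lt_0_compat; lra).
  pose proof (jump_terms_small r0 ((Rad - r0) / r0) (flux_ratio_bound Rad kappa r0) (u r0) (- di)
    tau alpha kappa r0_pos (Rlt_le _ _ Hrho) Hu0 kappa_pos alpha_nonneg
    ltac:(lra) tau_bounds alpha_small) as Hsmall.
  pose proof W_jump as HWe. pose proof ze_eq as Hze.
  assert (0 <= u r0 * (- di * tau) * ((Rad - r0) / r0)).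
  { apply Rmult_le_pos; [apply Rmult_le_pos; [|apply Rmult_le_pos]|]; lra. }
  (* The jump of W across r0 is too small to make W(r0+) nonnegative when ze < 0,
     and to reach the exterior lower bound on W(r0+) when ze >= 0. *)
  destruct (Rlt_le_dec ze 0) as [Hneg | Hnonneg].
  - assert (HWe_neg : r0 * (u r0 * sze - ze * di) < 0).
    { rewrite HWe. replace ((- di) ^ 2) with (di ^ 2) in Hsmall by ring. nra. }
    destruct (at_right_witness r0 Rad _ r0_lt_Rad (filter_and _ _
      (ev_lt_of_lim _ z ze 0 z_lim_right Hneg)
      (ev_lt_of_lim _ W _ 0 W_lim_right HWe_neg))) as [r2 [Hr2 [Hz2 HW2]]].
    exact (not_z_neg_W_nonpos_out r2 Hr2 Hz2 (Rlt_le _ _ HW2)).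
  - pose proof (W_lim_right_lower_bound Hnonneg) as Hlow.
    assert (u r0 * ze * ((Rad - r0) / r0) < u r0 * (- di * tau) * ((Rad - r0) / r0)).
    { apply Rmult_lt_compat_r; [lra|]. apply Rmult_lt_compat_l; lra. }
    replace (- (u r0 * ze / r0) * (Rad - r0)) with (- (u r0 * ze * ((Rad - r0) / r0)))
      in Hlow by (field; lra).
    replace ((- di) ^ 2) with (di ^ 2) in Hsmall by ring. nra.
Qed.

Lemma ze_nonneg : 0 <= ze.
Proof.
  destruct (Rle_lt_dec 0 ze) as [| Hneg]; auto; exfalso.
  pose proof di_nonpos. pose proof tau_bounds. pose proof ze_eq.
  assert (Hzi : zi < 0) by nra.
  destruct (at_left_witness 0 r0 _ r0_pos (ev_lt_of_lim _ z zi 0 z_lim_left Hzi))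
    as [r1 [Hr1 Hz1]].
  pose proof (z_nonneg_inside r1 Hr1). lra.
Qed.

Lemma z_nonneg r : 0 < r < Rad -> r <> r0 -> 0 <= z r.
Proof.
  intros Hr Hr0. destruct (Rdichotomy _ _ Hr0).
  - apply z_nonneg_inside. lra.
  - apply (z_nonneg_out_of_ze_nonneg ze_nonneg). lra.
Qed.

End RadialProblem.

Theorem lemma6p5 :
  forall (Rad kappa m0 r0 : R),
    0 < Rad -> 0 < m0 -> m0 < kappa -> 0 < r0 -> r0 < Rad ->
    kappa * (PI * r0 ^ 2) = m0 * (PI * Rad ^ 2) ->
    exists abar : R, 0 < abar /\
      forall (alpha lam : R) (u z : R -> R),
        0 <= alpha <= abar ->
        principal_pair Rad kappa r0 alpha lam u ->
        z_sol Rad kappa r0 alpha lam u 1 z ->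
        forall r, 0 < r < Rad -> r <> r0 -> 0 <= z r.
Proof.
  intros Rad kappa m0 r0 HRad Hm0 Hkappa Hr0 Hr0Rad _.
  exists (alpha_bar Rad kappa r0). split; [apply alpha_bar_pos; lra|].
  intros alpha lam u z [Ha Hab] Hu Hz.
  destruct Hu as (Hu & Hu0 & Hur0 & HuRad & HuRad0 & Hpos & (di & de & Hdi & Hde & Hjump) & _).
  destruct Hz as (Hz & (zi & ze & szi & sze & dui & due & Hzi & Hze & Hszi & Hsze & Hdui & Hdue
    & Hjs & Hjz) & _ & Hz0 & _ & HzRad).
  rewrite HuRad0 in HuRad.
  intros r Hr Hrr0.
  apply (z_nonneg Rad kappa r0 alpha lam di de u Hr0 Hr0Rad ltac:(lra) Ha Hu Hu0 Hur0 HuRad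
           Hpos Hdi Hde ltac:(lra) zi ze szi sze dui due z); assumption.
Qed.
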